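(* Every oriented graph without transmitters has at least three weak kings.
   Context: An oriented graph is a digraph with no loops and no pair of symmetric arcs. A transmitter is a vertex of indegree $0$. For vertices $u,v$ write $u(1\text{-}0)v$ if there is an arc from $u$ to $v$, and $u(0\text{-}0)v$ if there is no arc between $u$ and $v$. A vertex $v$ is weakly reachable within two steps from $u$ if $u(1\text{-}0)v$, or $u(0\text{-}0)v$, or for some vertex $w$ one has $u(1\text{-}0)w(1\text{-}0)v$, or $u(1\text{-}0)w(0\text{-}0)v$, or $u(0\text{-}0)w(1\text{-}0)v$. A vertex $u$ of an oriented graph $D$ is a weak king if every other vertex of $D$ is weakly reachable within two steps from $u$. *)

From mathcomp Require Import all_boot.
Set Implicit Arguments. Unset Strict Implicit. Unset Printing Implicit Defensive.

Definition oriented_graph (T : finType) (arc : rel T) : Prop :=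
  (forall u, ~~ arc u u) /\ (forall u v, arc u v -> ~~ arc v u).

Definition transmitter (T : finType) (arc : rel T) (v : T) : bool :=
  [forall u, ~~ arc u v].

Definition arc10 (T : finType) (arc : rel T) (u v : T) : bool := arc u v.
Definition arc00 (T : finType) (arc : rel T) (u v : T) : bool :=
  ~~ arc u v && ~~ arc v u.

Definition weakly_reachable2 (T : finType) (arc : rel T) (u v : T) : bool :=
  [|| arc10 arc u v, arc00 arc u v
    | [exists w, [|| arc10 arc u w && arc10 arc w v,
                     arc10 arc u w && arc00 arc w v
                   | arc00 arc u w && arc10 arc w v]]].

Definition weak_king (T : finType) (arc : rel T) (u : T) : bool :=
  [forall v, (v != u) ==> weakly_reachable2 arc u v].

From mathcomp Require Import all_boot.

Set Implicit Arguments.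
Unset Strict Implicit.
Unset Printing Implicit Defensive.

(* If v is not weakly reachable from u within two steps, then v -> u and v
   dominates every out-neighbour of u, so the out-set of u is strictly contained
   in that of v.  Hence a vertex whose out-set is inclusion-maximal is a weak
   king.  Every out-set lies in a maximal one, so every vertex m with an
   in-neighbour x has a weak king above it (its maximal out-set contains that of
   x, hence m).  Without transmitters this gives weak kings m1, m2 -> m1 and
   m3 -> m2, which are pairwise distinct since the graph is oriented. *)

Section WeakKings.
Variables (T : finType) (arc : rel T).

Definition out_set (u : T) : {set T} := [set w | arc u w].

Lemma nonking_dominated u :
  ~~ weak_king arc u -> exists2 v, arc v u & out_set u \subset out_set v.
Proof.
case/forallPn => v; rewrite negb_imply => /andP [_].
rewrite /weakly_reachable2 /arc10 /arc00 !negb_or => /and3P [nuv nn /existsPn nw].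
have avu : arc v u by move: nn; rewrite nuv /= negbK.
exists v => //; apply/subsetP => w; rewrite !inE => uw.
have := nw w; rewrite uw /= !negb_or => /and3P [nwv].
by rewrite nwv /= negbK.
Qed.

Hypothesis arc_irr : irreflexive arc.

Lemma weak_king_maximal u :
  (forall v, ~~ (out_set u \proper out_set v)) -> weak_king arc u.
Proof.
move=> umax; apply/negPn/negP => /nonking_dominated [v vu uv].
have /negP := umax v; apply; apply/properP; split => //.
by exists u; rewrite !inE ?vu ?arc_irr.
Qed.

Lemma weak_king_above x : exists2 y, weak_king arc y & out_set x \subset out_set y.
Proof.
have [y xy ymax] := @arg_maxnP T x (fun y => out_set x \subset out_set y)
  (fun y => #|out_set y|) (subxx _).
exists y => //; apply: weak_king_maximal => v; apply/negP => yv.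
have xv : out_set x \subset out_set v by apply: subset_trans (proper_sub yv).
by have := ymax v xv; rewrite /= leqNgt proper_card.
Qed.

Lemma weak_king_in_arc m : ~~ transmitter arc m -> exists2 y, weak_king arc y & arc y m.
Proof.
case/forallPn => x; rewrite negbK => xm.
have [y ky /subsetP xy] := weak_king_above x.
by exists y => //; have := xy m; rewrite !inE; apply.
Qed.

End WeakKings.

Theorem theorem6 (T : finType) (arc : rel T) :
  0 < #|T| ->
  oriented_graph arc ->
  (forall v : T, ~~ transmitter arc v) ->
  3 <= #|[set u : T | weak_king arc u]|.
Proof.
move=> /card_gt0P [x _] [noloop asym] no_transmitter.
have irr : irreflexive arc := fun u => negbTE (noloop u).
have arc_neq u v : arc u v -> u != v.
  by move=> uv; apply: contraTneq uv => ->; rewrite irr.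
have [m1 k1 _] := weak_king_above irr x.
have [m2 k2 a21] := weak_king_in_arc irr (no_transmitter m1).
have [m3 k3 a32] := weak_king_in_arc irr (no_transmitter m2).
apply/card_gt2P; exists m3, m2, m1; split; first by rewrite !inE k1 k2 k3.
split; [exact: arc_neq a32 | exact: arc_neq a21 |].
by apply: contraTneq a21 => eq13; rewrite -eq13 in a32; apply: asym.
Qed.
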